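(* Let $n\ge1$ and $\boldsymbol x=(x_1,\dots,x_n)\in\mathbb C^n$ with pairwise distinct components. Let $\sigma_{l,d}$ (resp. $\sigma_d$) be the elementary symmetric polynomial of degree $d$ in $x_1,\dots,\widehat{x_l},\dots,x_n$ (resp. in $x_1,\dots,x_n$), with $\sigma_0=1$, and let $\tau_l=\prod_{h\neq l}(x_l-x_h)$. Let $\Sigma=(\sigma_{l,n-j})_{l,j=1}^n$, $X=\mathrm{diag}(x_l)_{l=1}^n$, $T=\mathrm{diag}(\tau_l^{-1})_{l=1}^n$. Then for every $r\in\{0,1,\dots,n\}$, $${}^t\Sigma\,X^rT\,\Sigma=\begin{pmatrix}(-1)^{n-r}A&0\\0&(-1)^{n-r+1}B\end{pmatrix},$$ where $A$ is the $r\times r$ matrix with $(k,j)$-entry $a_{k,j}=\sigma_{n+r-k-j+1}$ if $k+j\ge r+1$ and $0$ otherwise, and $B$ is the $(n-r)\times(n-r)$ matrix with $(k,j)$-entry $b_{k,j}=\sigma_{n-r-k-j+1}$ if $k+j\le n-r+1$ and $0$ otherwise.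
   Context: ${}^t\Sigma$ denotes the transpose of $\Sigma$. *)

From mathcomp Require Import all_boot all_algebra.
From mathcomp Require Import complex.
From mathcomp Require Import reals Rstruct.
Set Implicit Arguments. Unset Strict Implicit. Unset Printing Implicit Defensive.
Import GRing.Theory Num.Theory.
Local Open Scope ring_scope.

Definition C : numClosedFieldType := (Rdefinitions.R)[i].

Definition esymx n (x : 'I_n -> C) (d : nat) : C :=
  \sum_(I : {set 'I_n} | #|I| == d) \prod_(i in I) x i.

Definition esymx_omit n (x : 'I_n -> C) (l : 'I_n) (d : nat) : C :=
  \sum_(I : {set 'I_n} | (#|I| == d) && (l \notin I)) \prod_(i in I) x i.

Definition tau n (x : 'I_n -> C) (l : 'I_n) : C :=
  \prod_(h < n | h != l) (x l - x h).

(* Sigma = (sigma_{l, n-j})_{l,j=1..n}; with 0-based l', j' : sigma_{l', n-1-j'} *)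
Definition SigmaM n (x : 'I_n -> C) : 'M[C]_n :=
  \matrix_(l < n, j < n) esymx_omit x l (n - j.+1).

Definition XM n (x : 'I_n -> C) : 'M[C]_n := diag_mx (\row_l x l).

Definition TM n (x : 'I_n -> C) : 'M[C]_n := diag_mx (\row_l (tau x l)^-1).

Definition AM n (x : 'I_n -> C) (r : nat) : 'M[C]_r :=
  \matrix_(k < r, j < r)
    if (r.+1 <= k.+1 + j.+1)%N then esymx x (n + r + 1 - (k.+1 + j.+1))%N else 0.

Definition BM n (x : 'I_n -> C) (r : nat) : 'M[C]_(n - r) :=
  \matrix_(k < n - r, j < n - r)
    if (k.+1 + j.+1 <= (n - r).+1)%N then esymx x ((n - r).+1 - (k.+1 + j.+1))%N else 0.

Definition blockdiag n r (hr : (r <= n)%N) (P : 'M[C]_r) (Q : 'M[C]_(n - r)) : 'M[C]_n :=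
  castmx (subnKC hr, subnKC hr) (block_mx P 0 0 Q).

(* Let g_l = prod_(h <> l) (X - x_h), f = prod_h (X - x_h), and G the matrix of
   coefficients of the g_l, so that Sigma = G D for the sign matrix
   D = diag((-1)^(n-j)).  Since g_l(x_m) = [l = m] tau_l, the Vandermonde matrix V
   satisfies G V = T^-1, hence V T G = 1.  Writing f = (X - x_m) g_m, a telescoping
   sum gives V^T N = X^r G, where N is the symmetric Hankel-type matrix with entries
   -f_(i+j+1-r) on the upper r x r block, f_(i+j+1-r) on the lower block and 0
   elsewhere.  Therefore G^T X^r T G = N^T V T G = N, and D N D is the stated block
   matrix once the coefficients of f are written as signed sigma_d. *)

From mathcomp Require Import all_boot all_algebra.
From mathcomp Require Import complex.
From mathcomp Require Import reals Rstruct.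
From mathcomp Require Import zify.
Set Implicit Arguments. Unset Strict Implicit. Unset Printing Implicit Defensive.
Import GRing.Theory Num.Theory.
Local Open Scope ring_scope.

Lemma signr_eq (R : pzRingType) (a b : nat) :
  ~~ odd (a + b) -> (-1) ^+ a = (-1) ^+ b :> R.
Proof. by rewrite oddD negb_add => /eqP ab; rewrite -signr_odd ab signr_odd. Qed.

Lemma mulr_sign_sandwich (R : comPzRingType) a b c d (e : R) :
  ~~ odd (a + b + c + d) -> (-1) ^+ a * ((-1) ^+ b * e) * (-1) ^+ c = (-1) ^+ d * e.
Proof.
move=> odd_abcd; rewrite mulrC !mulrA -!exprD; congr (_ * _).
by apply: signr_eq; lia.
Qed.

Section ProdXsubCOn.
Variables (R : comNzRingType) (I : finType) (x : I -> R).

Definition esym_on (S : {set I}) (d : nat) : R :=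
  \sum_(J : {set I} | (J \subset S) && (#|J| == d)) \prod_(i in J) x i.

Definition prod_XsubC_on (S : {set I}) : {poly R} :=
  \prod_(h in S) ('X - (x h)%:P).

Lemma prod_XsubC_on_expand S :
  prod_XsubC_on S = \sum_(J : {set I} | J \subset S)
    ((-1) ^+ #|J| * \prod_(i in J) x i)%:P * 'X^(#|S| - #|J|).
Proof.
pose F h b : {poly R} := if b then - (x h)%:P else 'X.
have -> : prod_XsubC_on S = \prod_h (F h true *+ (h \in S) + F h false ^+ (h \in S)).
  rewrite /prod_XsubC_on big_mkcond; apply: eq_bigr => h _.
  by case: (h \in S); rewrite ?mulr0n ?add0r // addrC.
rewrite bigA_distr (bigID (fun J : {set I} => J \subset S)) /=.
rewrite [X in _ + X]big1 ?addr0 => [|J /subsetPn [h hJ hS]]; last first.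
  by rewrite (bigD1 h) //= hJ (negbTE hS) mulr0n mul0r.
apply: eq_bigr => J JS; rewrite (bigID (mem J)) /=; congr (_ * _).
  rewrite (eq_bigr (fun h => (- x h)%:P)) => [|h hJ]; last first.
    by rewrite hJ (subsetP JS h hJ) polyCN.
  by rewrite -rmorph_prod prodrN.
rewrite (eq_bigr (fun h => if h \in S then 'X else 1)) => [|h /negbTE hJ]; last first.
  by rewrite hJ; case: (h \in S).
rewrite -big_mkcondr (eq_bigl (mem (S :\: J))) => [|h]; last by rewrite !inE andbC.
by rewrite prodr_const cardsD (setIidPr JS).
Qed.

Lemma coef_prod_XsubC_on S k :
  (prod_XsubC_on S)`_k =
    if (k <= #|S|)%N then (-1) ^+ (#|S| - k) * esym_on S (#|S| - k) else 0.
Proof.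
rewrite prod_XsubC_on_expand coef_sum.
under eq_bigr do rewrite coefCM coefXn mulr_natr mulrb.
rewrite -big_mkcondr /=; case: leqP => [le_kS | lt_Sk]; last first.
  by rewrite big1 // => J /andP [_ /eqP]; lia.
rewrite /esym_on mulr_sumr; apply: eq_big => [J | J /andP [JS /eqP kE]].
  case: (boolP (J \subset S)) => //= /subset_leq_card JS.
  by apply/eqP/eqP; lia.
by move: (subset_leq_card JS) => ?; congr (_ ^+ _ * _); lia.
Qed.

Lemma horner_prod_XsubC_on S y : (prod_XsubC_on S).[y] = \prod_(h in S) (y - x h).
Proof. by rewrite horner_prod; under eq_bigr do rewrite hornerXsubC. Qed.

Lemma size_prod_XsubC_on S : size (prod_XsubC_on S) = #|S|.+1.
Proof. by rewrite /prod_XsubC_on -big_enum size_prod_XsubC cardE. Qed.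

Lemma prod_XsubC_onD1 (S : {set I}) l : l \in S ->
  prod_XsubC_on S = ('X - (x l)%:P) * prod_XsubC_on (S :\ l).
Proof. by move=> lS; rewrite /prod_XsubC_on (big_setD1 l lS). Qed.

End ProdXsubCOn.

Section SplitHankel.
Variable R : comNzRingType.

(* ('X^r * p)`_(i + j).+1 is p`_(i + j + 1 - r), and 0 when i + j + 1 < r. *)
Definition split_hankel (r : nat) (p : {poly R}) (i j : nat) : R :=
  let c := ('X^r * p)`_(i + j).+1 in
  if ((i < r) && (j < r))%N then - c else if ((r <= i) && (r <= j))%N then c else 0.

Lemma split_hankelC r p i j : split_hankel r p i j = split_hankel r p j i.
Proof. by rewrite /split_hankel addnC andbC [((r <= j) && _)%N]andbC. Qed.

Lemma coef_XsubC_mul (y : R) (q : {poly R}) k :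
  (('X - y%:P) * q)`_k.+1 = q`_k - y * q`_k.+1.
Proof. by rewrite mulrBl coefB coefXM coefCM. Qed.

Lemma sum_split_hankel_XsubC (g : {poly R}) (y : R) n r j :
  (r <= n)%N -> (size g <= n)%N ->
  \sum_(i < n) y ^+ i * split_hankel r (('X - y%:P) * g) i j = y ^+ r * g`_j.
Proof.
(* With h = 'X^r * g the summands are F i - F i.+1; F 0 = 0 since j < r in the
   upper block, and F n = 0 by the degree bound on g in the lower block. *)
move=> le_rn szg; set h := 'X^r * g; pose F i := y ^+ i * h`_(i + j).
have step i : y ^+ i * ('X^r * (('X - y%:P) * g))`_(i + j).+1 = F i - F i.+1.
  by rewrite mulrCA coef_XsubC_mul mulrBr mulrA -exprSr.
have Fr : F r = y ^+ r * g`_j by rewrite /F coefXnM ltnNge leq_addr addKn.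
rewrite -(big_mkord xpredT (fun i => y ^+ i * split_hankel r (('X - y%:P) * g) i j)).
rewrite (big_cat_nat (leq0n r) le_rn) /=.
rewrite big_nat_cond [X in _ + X]big_nat_cond /split_hankel.
case: (ltnP j r) => [lt_jr | le_rj].
  rewrite [X in _ + X]big1 ?addr0 => [|i /andP [/andP [le_ri _] _]]; last first.
    by rewrite !ifN ?mulr0 //; lia.
  rewrite (eq_bigr (fun i => F i.+1 - F i)) => [|i /andP [/andP [_ lt_ir] _]].
    by rewrite -big_nat_cond telescope_sumr // Fr /F add0n coefXnM lt_jr mulr0 subr0.
  by rewrite lt_ir mulrN step opprB.
rewrite [X in X + _]big1 ?add0r => [|i /andP [/andP [_ lt_ir] _]]; last first.
  by rewrite !ifN ?mulr0 //; lia.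
rewrite (eq_bigr (fun i => - (F i.+1 - F i))) => [|i /andP [/andP [le_ri _] _]].
  rewrite sumrN -big_nat_cond telescope_sumr // opprB Fr /F coefXnM ltnNge.
  rewrite (leq_trans le_rn (leq_addr _ _)) /=.
  rewrite [g`_(n + j - r)]nth_default ?mulr0 ?subr0 //.
  by rewrite (leq_trans szg) // -addnBA // leq_addr.
by rewrite ltnNge le_ri /= step opprB.
Qed.

End SplitHankel.

Lemma eq_blockdiag n r (hr : (r <= n)%N) (A : 'M[C]_r) (B : 'M[C]_(n - r))
    (M : 'M[C]_n) :
  (forall (i j : 'I_n) (i' j' : 'I_r), i = i' :> nat -> j = j' :> nat ->
     M i j = A i' j') ->
  (forall (i j : 'I_n) (i' j' : 'I_(n - r)),
     i = (r + i')%N :> nat -> j = (r + j')%N :> nat -> M i j = B i' j') ->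
  (forall i j : 'I_n, (i < r)%N != (j < r)%N -> M i j = 0) ->
  M = blockdiag hr A B.
Proof.
move=> MA MB M0; apply/matrixP => i j; rewrite /blockdiag castmxE /block_mx !mxE.
case: (splitP (cast_ord _ i)) => i' /= Hi; rewrite mxE;
  case: (splitP (cast_ord _ j)) => j' /= Hj; rewrite ?mxE.
- exact: MA.
- apply: M0; move: (ltn_ord i'); lia.
- apply: M0; move: (ltn_ord j'); lia.
- exact: MB.
Qed.

Section SymmetricFunctionMatrices.
Variables (n : nat) (x : 'I_n -> C).

Local Notation f := (prod_XsubC_on x setT).
Local Notation g l := (prod_XsubC_on x [set~ l]).

Lemma coef_prod_XsubC_all k :
  f`_k = if (k <= n)%N then (-1) ^+ (n - k) * esymx x (n - k) else 0.
Proof.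
rewrite coef_prod_XsubC_on cardsT card_ord /esymx /esym_on.
by under eq_bigl do rewrite subsetT.
Qed.

Lemma coef_prod_XsubC_omit l j : (j < n)%N ->
  (g l)`_j = (-1) ^+ (n - j.+1) * esymx_omit x l (n - j.+1).
Proof.
move=> lt_jn; rewrite coef_prod_XsubC_on cardsC1 card_ord ifT; last lia.
rewrite /esymx_omit /esym_on; have -> : (n.-1 - j = n - j.+1)%N by lia.
congr (_ * _); apply: eq_bigl => J.
by rewrite subsetC sub1set inE andbC.
Qed.

Lemma size_prod_XsubC_omit l : (size (g l) <= n)%N.
Proof. by rewrite size_prod_XsubC_on cardsC1 card_ord; case: n l => [[]|]. Qed.

Lemma horner_prod_XsubC_omit l m :
  (g l).[x m] = if l == m then tau x l else 0.
Proof.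
rewrite horner_prod_XsubC_on; case: eqP => [<- | /eqP ne_lm].
  by apply: eq_bigl => h; rewrite !inE.
by rewrite (bigD1 m) ?inE 1?eq_sym //= subrr mul0r.
Qed.

Definition omit_coef_mx : 'M[C]_n := \matrix_(l, j) (g l)`_j.

Definition alt_sign_mx : 'M[C]_n := diag_mx (\row_(j < n) (-1) ^+ (n - j.+1)).

Definition vandermonde_x : 'M[C]_n := Vandermonde n (\row_l x l).

Definition split_hankel_mx r : 'M[C]_n := \matrix_(i, j) split_hankel r f i j.

Lemma SigmaM_alt_sign : SigmaM x = omit_coef_mx *m alt_sign_mx.
Proof.
apply/matrixP => l j; rewrite mul_mx_diag !mxE coef_prod_XsubC_omit //.
by rewrite mulrC mulrA -exprD (@signr_eq _ _ 0) ?mul1r //; lia.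
Qed.

Lemma XM_exp r : XM x ^+ r = diag_mx (\row_l x l ^+ r).
Proof.
elim: r => [|r IHr]; first by apply/matrixP => i j; rewrite !mxE.
rewrite exprS IHr -mulmxE mulmx_diag; congr diag_mx.
by apply/rowP => l; rewrite !mxE exprS.
Qed.

Lemma omit_coef_mx_vandermonde :
  omit_coef_mx *m vandermonde_x = diag_mx (\row_l tau x l).
Proof.
apply/matrixP => l m; rewrite !mxE mulrb -horner_prod_XsubC_omit.
rewrite (horner_coef_wide _ (size_prod_XsubC_omit l)); apply: eq_bigr => j _.
by rewrite !mxE.
Qed.

Lemma tau_neq0 l : injective x -> tau x l != 0.
Proof.
move=> inj_x; apply/prodf_neq0 => h ne_hl; rewrite subr_eq0.
by apply: contra ne_hl => /eqP/inj_x ->.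
Qed.

Lemma vandermonde_inverse : injective x ->
  vandermonde_x *m TM x *m omit_coef_mx = 1%:M.
Proof.
move=> inj_x; apply: mulmx1C; rewrite mulmxA omit_coef_mx_vandermonde mulmx_diag.
rewrite -diag_const_mx; congr diag_mx; apply/rowP => l.
by rewrite !mxE divff // tau_neq0.
Qed.

Lemma vandermonde_split_hankel r : (r <= n)%N ->
  vandermonde_x^T *m split_hankel_mx r = diag_mx (\row_l x l ^+ r) *m omit_coef_mx.
Proof.
move=> le_rn; apply/matrixP => m j; rewrite mul_diag_mx !mxE.
under eq_bigr do rewrite !mxE.
rewrite [prod_XsubC_on x setT](prod_XsubC_onD1 _ (in_setT m)) setTD.
exact: sum_split_hankel_XsubC (size_prod_XsubC_omit m).
Qed.

Lemma split_hankel_mx_tr r : (split_hankel_mx r)^T = split_hankel_mx r.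
Proof. by apply/matrixP => i j; rewrite !mxE split_hankelC. Qed.

Lemma omit_coef_mx_congruence r : injective x -> (r <= n)%N ->
  omit_coef_mx^T *m diag_mx (\row_l x l ^+ r) *m TM x *m omit_coef_mx =
  split_hankel_mx r.
Proof.
move=> inj_x le_rn.
have -> : omit_coef_mx^T *m diag_mx (\row_l x l ^+ r) =
    (diag_mx (\row_l x l ^+ r) *m omit_coef_mx)^T by rewrite trmx_mul tr_diag_mx.
rewrite -vandermonde_split_hankel // trmx_mul trmxK split_hankel_mx_tr.
by rewrite -!mulmxA [vandermonde_x *m _]mulmxA vandermonde_inverse // mulmx1.
Qed.

Lemma alt_sign_split_hankel r (hr : (r <= n)%N) :
  alt_sign_mx *m split_hankel_mx r *m alt_sign_mx =
  blockdiag hr ((-1) ^+ (n - r) *: AM x r) ((-1) ^+ (n - r + 1) *: BM x r).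
Proof.
apply: eq_blockdiag => [i j i' j' ii' jj' | i j i' j' ii' jj' | i j ne_ij].
all: rewrite mul_mx_diag mul_diag_mx !mxE /split_hankel.
- have lt_ir := ltn_ord i'; have lt_jr := ltn_ord j'.
  rewrite ii' jj' lt_ir lt_jr /= coefXnM coef_prod_XsubC_all.
  case: (ltnP (i' + j').+1 r) => [lt_r | le_r].
    by rewrite ifN ?oppr0 ?mulr0 ?mul0r //; lia.
  rewrite !ifT; try lia.
  have -> : (n - ((i' + j').+1 - r) = n + r + 1 - (i'.+1 + j'.+1))%N by lia.
  rewrite -mulNr -[- (-1) ^+ _]mulN1r -exprS; apply: mulr_sign_sandwich; lia.
- have lt_inr := ltn_ord i'; have lt_jnr := ltn_ord j'.
  rewrite ii' jj' [in LHS]ifN ?[in LHS]ifT ?coefXnM ?[in LHS]ifN; try lia.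
  rewrite coef_prod_XsubC_all.
  case: (leqP (i'.+1 + j'.+1) (n - r).+1) => [le_ij | lt_ij].
    rewrite !ifT; try lia.
    have -> : (n - ((r + i' + (r + j')).+1 - r) = (n - r).+1 - (i'.+1 + j'.+1))%N by lia.
    apply: mulr_sign_sandwich; lia.
  by rewrite !ifN ?mulr0 ?mul0r //; lia.
- by rewrite !ifN ?mulr0 ?mul0r //; lia.
Qed.

End SymmetricFunctionMatrices.

Theorem lemma7p3 (n : nat) (hn : (1 <= n)%N) (x : 'I_n -> C) (hx : injective x)
  (r : nat) (hr : (r <= n)%N) :
  (SigmaM x)^T *m (XM x ^+ r *m TM x) *m SigmaM x =
  blockdiag hr ((-1) ^+ (n - r) *: AM x r) ((-1) ^+ (n - r + 1) *: BM x r).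
Proof.
rewrite -(alt_sign_split_hankel x hr) -(omit_coef_mx_congruence hx hr).
rewrite SigmaM_alt_sign XM_exp trmx_mul [(alt_sign_mx _)^T]tr_diag_mx.
by rewrite !mulmxA.
Qed.
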